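(* Let $k\ge2$, $0\le\alpha<1$, and let $G$ be a connected $k$-uniform hypergraph on $n$ vertices with $m$ edges, degrees $d_i$ ($i\in V(G)$) and maximum degree $\Delta$. Let $x$ be the $\alpha$-Perron vector of $G$ and $\overline{x}=\max_i x_i$. Then \[\rho_\alpha(G)\le\alpha\Delta+(1-\alpha)km\,\overline{x}^{\,k}\] and \[\rho_\alpha(G)\le\alpha\Delta+(1-\alpha)\Big(\sum_{i\in V(G)}d_i^{\frac{k}{k-1}}\Big)^{\frac{k-1}{k}}\overline{x}^{\,k-1},\] and equality holds in either inequality if and only if $G$ is regular.
   Context: Hypergraphs are finite with edges being sets; $k$-uniform means every edge has $k$ vertices; $d_i$ is the number of edges containing $i$; regular means all degrees equal. $\mathcal A(G)$ is the order-$k$ dimension-$n$ tensor with $(i_1,\dots,i_k)$-entry $\frac1{(k-1)!}$ if $\{i_1,\dots,i_k\}\in E(G)$, $0$ otherwise; $\mathcal D(G)$ is the diagonal tensor with $(i,\dots,i)$-entry $d_i$; $\mathcal A_\alpha(G)=\alpha\mathcal D(G)+(1-\alpha)\mathcal A(G)$. For an order-$k$ tensor $\mathcal T$, $(\mathcal Tx)_i=\sum_{i_2,\dots,i_k}\mathcal T_{ii_2\dots i_k}x_{i_2}\cdots x_{i_k}$; $\lambda$ is an eigenvalue if $\mathcal Tx=\lambda x^{[k-1]}$ for some $x\neq 0$, where $x^{[k-1]}=(x_i^{k-1})_i$. $\rho_\alpha(G)$ is the largest modulus of an eigenvalue of $\mathcal A_\alpha(G)$. A path is an alternating sequence of distinct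 vertices and distinct edges $(v_0,e_1,\dots,e_s,v_s)$ with $v_{i-1},v_i\in e_i$; $G$ is connected if any two vertices are joined by a path. For connected $G$, the $\alpha$-Perron vector of $G$ is the unique vector $x$ with all entries positive, $\sum_i x_i^k=1$, and $\mathcal A_\alpha(G)x=\rho_\alpha(G)x^{[k-1]}$. *)

From HB Require Import structures.
From mathcomp Require Import all_boot all_order all_algebra.
Set Implicit Arguments. Unset Strict Implicit. Unset Printing Implicit Defensive.
Import Order.TTheory GRing.Theory Num.Theory.
Local Open Scope ring_scope.

Definition uniform (n k : nat) (E : {set {set 'I_n}}) : Prop :=
  forall e, e \in E -> #|e| = k.

Definition deg (n : nat) (E : {set {set 'I_n}}) (i : 'I_n) : nat :=
  #|[set e in E | i \in e]|.

Definition max_deg (n : nat) (E : {set {set 'I_n}}) : nat :=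
  (\max_(i < n) deg E i)%N.

Definition regular (n : nat) (E : {set {set 'I_n}}) : Prop :=
  forall i j : 'I_n, deg E i = deg E j.

Definition is_path (n : nat) (E : {set {set 'I_n}}) (u v : 'I_n)
  (vs : seq 'I_n) (es : seq {set 'I_n}) : Prop :=
  [/\ size vs = (size es).+1, uniq vs, uniq es &
      all (fun e => e \in E) es] /\
  [/\ nth u vs 0 = u, last u vs = v &
      (forall t, (t < size es)%N ->
        (nth u vs t \in nth set0 es t) /\ (nth u vs t.+1 \in nth set0 es t))].

Definition connected (n : nat) (E : {set {set 'I_n}}) : Prop :=
  forall u v : 'I_n, exists vs es, is_path E u v vs es.

(* order-k, dimension-n tensors: functions of the index k-tuple *)
Definition tensor (C : Type) (n k : nat) := {ffun 'I_k -> 'I_n} -> C.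

(* (T x)_i = sum_{i_2..i_k} T_{i i_2 .. i_k} x_{i_2} ... x_{i_k} *)
Definition tapply (C : numClosedFieldType) (n k : nat) (T : tensor C n k)
  (x : 'I_n -> C) (i : 'I_n) : C :=
  \sum_(f : {ffun 'I_k -> 'I_n} | [forall j : 'I_k, (val j == 0%N) ==> (f j == i)])
     T f * \prod_(j : 'I_k | val j != 0%N) x (f j).

Definition adj_tensor (C : numClosedFieldType) (n k : nat)
  (E : {set {set 'I_n}}) : tensor C n k :=
  fun f => if [set f j | j : 'I_k] \in E then ((k.-1)`!)%:R^-1 else 0.

Definition deg_tensor (C : numClosedFieldType) (n k : nat)
  (E : {set {set 'I_n}}) : tensor C n k :=
  fun f => \sum_(i : 'I_n | [forall j : 'I_k, f j == i]) (deg E i)%:R.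

Definition A_alpha (C : numClosedFieldType) (n k : nat)
  (E : {set {set 'I_n}}) (alpha : C) : tensor C n k :=
  fun f => alpha * @deg_tensor C n k E f + (1 - alpha) * @adj_tensor C n k E f.

Definition is_eigenvalue (C : numClosedFieldType) (n k : nat)
  (T : tensor C n k) (lam : C) : Prop :=
  exists x : 'I_n -> C, (exists i, x i != 0) /\
    forall i, tapply T x i = lam * x i ^+ k.-1.

Definition is_spectral_radius (C : numClosedFieldType) (n k : nat)
  (T : tensor C n k) (rho : C) : Prop :=
  (exists lam, is_eigenvalue T lam /\ `|lam| = rho) /\
  (forall lam, is_eigenvalue T lam -> `|lam| <= rho).

Definition is_alpha_perron_vector (C : numClosedFieldType) (n k : nat)
  (E : {set {set 'I_n}}) (alpha rho : C) (x : 'I_n -> C) : Prop :=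
  [/\ forall i, 0 < x i,
      \sum_i x i ^+ k = 1 &
      forall i, tapply (@A_alpha C n k E alpha) x i = rho * x i ^+ k.-1].

From HB Require Import structures.
From mathcomp Require Import all_boot all_order all_algebra.
From mathcomp Require Import ring.
Set Implicit Arguments. Unset Strict Implicit. Unset Printing Implicit Defensive.
Import Order.TTheory GRing.Theory Num.Theory.
Local Open Scope ring_scope.

(* Pairing the eigenvector equation with x gives the Rayleigh-type identity
     rho = alpha * sum_i d_i x_i^k + (1 - alpha) * k * sum_(e in E) prod_(v in e) x_v,
   each edge being counted once from each of its k vertices.  Bounding d_i by
   Delta (as sum_i x_i^k = 1) and every edge product by xbar^k gives the first
   bound.  For the second, k * sum_e prod_e x = sum_i x_i sum_(e ∋ i) prod_(e\i) x
   <= xbar^(k-1) * sum_i d_i x_i, and Hölder's inequality with exponents k and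
   k/(k-1) bounds sum_i d_i x_i.  Equality forces x = xbar on every edge, hence
   everywhere by connectivity, and the eigenvector equation then reads rho = d_i
   for all i.  Conversely, if G is d-regular then d is an eigenvalue (with the
   all-ones eigenvector), so d <= rho; the eigenvector equation at a vertex where
   x is maximal then forces x to be maximal on its neighbours, so x is constant
   and both bounds are attained. *)

Section Inequalities.
Variable R : numDomainType.

Lemma ler_sum_eq (I : finType) (P : pred I) (F G : I -> R) :
  (forall i, P i -> F i <= G i) ->
  \sum_(i | P i) F i = \sum_(i | P i) G i -> forall i, P i -> F i = G i.
Proof.
move=> leFG eqFG i Pi; have [_] := leif_sum (fun j Pj => leif_eq (leFG j Pj)).
by rewrite eqFG eqxx => /esym/forall_inP/(_ i Pi)/eqP.
Qed.

Lemma ler_prod_eq (I : finType) (P : pred I) (F G : I -> R) :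
  (forall i, P i -> 0 <= F i <= G i) ->
  \prod_(i | P i) F i = \prod_(i | P i) G i -> \prod_(i | P i) G i != 0 ->
  forall i, P i -> F i = G i.
Proof.
move=> leFG eqFG nzG i Pi.
have F_ge0 j : P j -> 0 <= F j by case/leFG/andP.
have [_] := leif_pprod F_ge0 (fun j Pj => leif_eq (andP (leFG j Pj)).2).
by rewrite eqFG eqxx (negPf nzG) => /esym/forall_inP/(_ i Pi)/eqP.
Qed.

Lemma lerD_eq (a A b B : R) : a <= A -> b <= B -> a + b = A + B -> b = B.
Proof.
move=> leaA lebB eqD; apply/eqP; rewrite eq_le lebB /=.
by rewrite -(lerD2l A) -eqD lerD2r.
Qed.

Lemma young_pow (a b : R) k : 0 <= a -> 0 <= b ->
  k.+1%:R * (a ^+ k * b) <= k%:R * a ^+ k.+1 + b ^+ k.+1.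
Proof.
move=> a_ge0 b_ge0; elim: k => [|k IHk]; first by rewrite expr0 !mul1r mul0r add0r expr1.
have monotone_gap : 0 <= (a ^+ k.+1 - b ^+ k.+1) * (a - b).
  case/orP: (real_leVge (ger0_real a_ge0) (ger0_real b_ge0)) => [le_ab | le_ba].
    by rewrite mulr_le0 // subr_le0 // lerXn2r.
  by rewrite mulr_ge0 // subr_ge0 // lerXn2r.
rewrite -subr_ge0.
have -> : k.+1%:R * a ^+ k.+2 + b ^+ k.+2 - k.+2%:R * (a ^+ k.+1 * b) =
    a * (k%:R * a ^+ k.+1 + b ^+ k.+1 - k.+1%:R * (a ^+ k * b)) +
    (a ^+ k.+1 - b ^+ k.+1) * (a - b).
  by rewrite -[k.+2%:R]natr1 -[k.+1%:R]natr1 !exprS; ring.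
by rewrite addr_ge0 // mulr_ge0 // subr_ge0.
Qed.

End Inequalities.

Lemma holder_pow (C : numClosedFieldType) (I : finType) k (a x : I -> C) :
  (0 < k)%N -> (forall i, 0 <= a i) -> (forall i, 0 <= x i) ->
  \sum_i x i ^+ k.+1 = 1 ->
  \sum_i a i ^+ k * x i <= (k.+1).-root (\sum_i a i ^+ k.+1) ^+ k.
Proof.
move=> k_gt0 a_ge0 x_ge0 sum_xX.
set t := _.-root _.
have t_ge0 : 0 <= t by rewrite rootC_ge0 // sumr_ge0 // => i _; rewrite exprn_ge0.
have tK : t ^+ k.+1 = \sum_i a i ^+ k.+1 by rewrite rootCK.
have [t0 | t_neq0] := eqVneq t 0.
  have a0 i : a i = 0.
    have sum0 : \sum_i a i ^+ k.+1 = 0 by rewrite -tK t0 expr0n.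
    have /eqP := psumr_eq0P (P := predT) (fun j _ => exprn_ge0 k.+1 (a_ge0 j)) sum0 (i := i) isT.
    by rewrite expf_eq0 => /andP[_ /eqP].
  by rewrite t0 expr0n gtn_eqF // big1 // => i _; rewrite a0 expr0n gtn_eqF // mul0r.
have t_gt0 : 0 < t by rewrite lt_def t_neq0.
have sum_young : k.+1%:R * \sum_i (a i / t) ^+ k * x i <= k.+1%:R :> C.
  rewrite mulr_sumr (le_trans (ler_sum _ (fun i _ => young_pow k _ (x_ge0 i)))) //.
    by move=> i; rewrite divr_ge0.
  rewrite big_split /= -mulr_sumr sum_xX.
  under eq_bigr do rewrite expr_div_n.
  by rewrite -mulr_suml -tK mulfV ?expf_neq0 // mulr1 -natr1.
have -> : \sum_i a i ^+ k * x i = t ^+ k * \sum_i (a i / t) ^+ k * x i.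
  rewrite mulr_sumr; apply: eq_bigr => i _.
  by rewrite expr_div_n mulrA mulrCA mulfV ?expf_neq0 // mulr1.
by rewrite -[leRHS]mulr1 ler_wpM2l ?exprn_ge0 // -(ler_pM2l (ltr0Sn C k)) mulr1.
Qed.

Lemma connected_closed n (E : {set {set 'I_n}}) (S : 'I_n -> Prop) :
  connected E -> (exists i, S i) ->
  (forall e u v, e \in E -> u \in e -> v \in e -> S u -> S v) ->
  forall v, S v.
Proof.
move=> connE [i0 Si0] closedS v.
have [vs [es [[size_vs _ _ /allP esE] [vs0 vsv vs_es]]]] := connE i0 v.
suff S_vs t : (t <= size es)%N -> S (nth i0 vs t).
  by rewrite -vsv -nth_last size_vs; apply: S_vs.
elim: t => [|t IHt] lt_t; first by rewrite vs0.
have [in_t in_t1] := vs_es t lt_t.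
by apply: closedS in_t in_t1 (IHt (ltnW lt_t)); rewrite esE ?mem_nth.
Qed.

Section FfunCons.
Variables (n k : nat) (i : 'I_n).

Definition ffun_cons (g : {ffun 'I_k -> 'I_n}) : {ffun 'I_k.+1 -> 'I_n} :=
  [ffun j => if unlift ord0 j is Some j' then g j' else i].

Lemma ffun_cons0 g : ffun_cons g ord0 = i.
Proof. by rewrite ffunE unlift_none. Qed.

Lemma ffun_consS g j : ffun_cons g (lift ord0 j) = g j.
Proof. by rewrite ffunE liftK. Qed.

Lemma ffun_cons_inj : injective ffun_cons.
Proof. by move=> g1 g2 eq_g; apply/ffunP => j; rewrite -!ffun_consS eq_g. Qed.

Lemma sum_ffun_cons (R : nmodType) (F : {ffun 'I_k.+1 -> 'I_n} -> R) :
  \sum_(f : {ffun 'I_k.+1 -> 'I_n} | f ord0 == i) F f = \sum_g F (ffun_cons g).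
Proof.
rewrite -(big_imset F (in2W ffun_cons_inj)) /=.
apply: eq_bigl => f; apply/eqP/imsetP => [f0 | [g _ ->]]; last exact: ffun_cons0.
exists [ffun j => f (lift ord0 j)] => //; apply/ffunP => j; rewrite ffunE.
by case: unliftP => [j' -> | ->]; rewrite ?ffunE.
Qed.

Lemma imset_ffun_cons g :
  [set ffun_cons g j | j : 'I_k.+1] = i |: [set g j | j : 'I_k].
Proof.
apply/setP => v; rewrite !inE; apply/imsetP/orP => [[j _ ->] | ].
  case: (unliftP ord0 j) => [j' -> | ->]; last by rewrite ffun_cons0 eqxx; left.
  by rewrite ffun_consS; right; apply: imset_f.
case=> [/eqP -> | /imsetP [j _ ->]]; first by exists ord0; rewrite ?ffun_cons0.
by exists (lift ord0 j); rewrite ?ffun_consS.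
Qed.

End FfunCons.

Lemma card_setD1_succ (T : finType) (A : {set T}) a m :
  a \in A -> #|A| = m.+1 -> #|A :\ a| = m.
Proof. by move=> aA cardA; move: (cardsD1 a A); rewrite aA cardA add1n => -[]. Qed.

Section InjectiveFfuns.
Variables (n k : nat).

Definition inj_ffuns_on (A : {set 'I_n}) :=
  [set g : {ffun 'I_k -> 'I_n} in ffun_on (mem A) | injectiveb g].

Lemma card_inj_ffuns_on_eq (A : {set 'I_n}) : #|A| = k -> #|inj_ffuns_on A| = k`!.
Proof.
by move=> cardA; rewrite card_inj_ffuns_on card_ord cardE -cardA -cardE ffactnn.
Qed.

Lemma imset_inj_ffuns_on (A : {set 'I_n}) g :
  #|A| = k -> g \in inj_ffuns_on A -> [set g j | j : 'I_k] = A.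
Proof.
move=> cardA; rewrite inE => /andP [/ffun_onP g_on /injectiveP g_inj].
apply/eqP; rewrite eqEcard card_imset // card_ord cardA leqnn andbT.
by apply/subsetP => _ /imsetP [j _ ->].
Qed.

Lemma setU1_imset_eq (i : 'I_n) (e : {set 'I_n}) (g : {ffun 'I_k -> 'I_n}) :
  #|e| = k.+1 -> i \in e ->
  (i |: [set g j | j : 'I_k] == e) = (g \in inj_ffuns_on (e :\ i)).
Proof.
move=> card_e ie; have card_eD1 := card_setD1_succ ie card_e.
apply/eqP/idP => [def_e | g_inj]; last by rewrite (imset_inj_ffuns_on card_eD1 g_inj) setD1K.
have le_img := leq_imset_card g 'I_k; rewrite card_ord in le_img.
have := cardsU1 i [set g j | j : 'I_k]; rewrite def_e card_e.
have [i_img | i_img] := boolP (i \in _).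
  by rewrite add0n => card_img; move: le_img; rewrite -card_img ltnn.
rewrite add1n => -[card_img]; rewrite inE; apply/andP; split.
  apply/ffun_onP => j; rewrite !inE -def_e in_setU1 imset_f // orbT andbT.
  by apply: contraNneq i_img => <-; apply: imset_f.
have /imset_injP g_inj : #|[set g j | j : 'I_k]| == #|'I_k| by rewrite -card_img card_ord.
by apply/injectiveP => j1 j2; apply: g_inj.
Qed.

End InjectiveFfuns.

Section TensorApplication.
Variables (C : numClosedFieldType) (n k : nat) (E : {set {set 'I_n}}).

Lemma tapply_cons (T : tensor C n k.+1) x i :
  tapply T x i = \sum_g T (ffun_cons i g) * \prod_(j < k) x (g j).
Proof.
rewrite /tapply (eq_bigl (fun f : {ffun 'I_k.+1 -> 'I_n} => f ord0 == i)) => [|f].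
  rewrite sum_ffun_cons; apply: eq_bigr => g _.
  by rewrite big_mkcond big_ord_recl /= mul1r; under eq_bigr do rewrite ffun_consS.
apply/forallP/eqP => [/(_ ord0) /implyP/(_ isT)/eqP // | f0 j].
by apply/implyP => /eqP j0; rewrite (_ : j = ord0) ?f0 //; apply: ord_inj.
Qed.

Lemma tapply_deg_tensor x i :
  tapply (@deg_tensor C n k.+1 E) x i = (deg E i)%:R * x i ^+ k.
Proof.
rewrite tapply_cons (bigD1 [ffun=> i]) //= [X in _ + X]big1 ?addr0 => [|g g_neq].
  rewrite /deg_tensor (big_pred1 i) => [|v]; last first.
    apply/forallP/eqP => [/(_ ord0) | -> j]; first by rewrite ffun_cons0 => /eqP.
    by case: (unliftP ord0 j) => [j' -> | ->]; rewrite ?ffun_consS ?ffun_cons0 ?ffunE.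
  by under eq_bigr do rewrite ffunE; rewrite prodr_const card_ord.
rewrite /deg_tensor [X in X * _]big_pred0 ?mul0r // => v; apply/forallP => const_g.
move/eqP: g_neq; apply; apply/ffunP => j; rewrite ffunE.
by move: (const_g ord0) (const_g (lift ord0 j)); rewrite ffun_cons0 ffun_consS => /eqP -> /eqP.
Qed.

(* The [1 / k!] in the adjacency tensor cancels the [k!] orderings of the
   other vertices of each edge through [i]. *)
Lemma tapply_adj_tensor x i : uniform k.+1 E ->
  tapply (@adj_tensor C n k.+1 E) x i =
  \sum_(e in E | i \in e) \prod_(v in e :\ i) x v.
Proof.
move=> unifE; rewrite tapply_cons /adj_tensor.
under eq_bigr do rewrite imset_ffun_cons.
rewrite (bigID (fun g : {ffun 'I_k -> 'I_n} => i |: [set g j | j : 'I_k] \in E)) /=.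
rewrite [X in _ + X]big1 ?addr0 => [|g /negbTE ->]; last by rewrite mul0r.
rewrite (partition_big (fun g : {ffun 'I_k -> 'I_n} => i |: [set g j | j : 'I_k])
  (mem E)) //= [RHS]big_mkcondr /=; apply: eq_bigr => e eE.
have [ie | ie] := boolP (i \in e); last first.
  rewrite big_pred0 // => g; apply/negbTE/nandP; right.
  by apply: contraNneq ie => <-; rewrite setU11.
have card_eD1 := card_setD1_succ ie (unifE e eE).
rewrite (eq_bigl (fun g => g \in inj_ffuns_on k (e :\ i))) => [|g]; last first.
  by rewrite -(setU1_imset_eq _ (unifE e eE)) // andb_idl // => /eqP ->.
rewrite (eq_bigr (fun _ => (k`!)%:R^-1 * \prod_(v in e :\ i) x v)) => [|g g_inj].
  rewrite sumr_const card_inj_ffuns_on_eq // -mulrnAl -[_^-1 *+ _]mulr_natr mulVf ?mul1r //.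
  by rewrite pnatr_eq0 -lt0n fact_gt0.
have img_g := imset_inj_ffuns_on card_eD1 g_inj.
have g_injective : injective g by move: g_inj; rewrite inE => /andP[_ /injectiveP].
rewrite img_g setD1K // eE -[in RHS]img_g big_imset //=.
by move=> ? ? _ _ /g_injective.
Qed.

Lemma tapply_A_alpha alpha x i : uniform k.+1 E ->
  tapply (@A_alpha C n k.+1 E alpha) x i =
  alpha * (deg E i)%:R * x i ^+ k +
  (1 - alpha) * \sum_(e in E | i \in e) \prod_(v in e :\ i) x v.
Proof.
move=> unifE; rewrite -tapply_adj_tensor // -mulrA -tapply_deg_tensor.
rewrite /tapply /A_alpha !mulr_sumr -big_split /=; apply: eq_bigr => f _.
by rewrite mulrDl !mulrA.
Qed.

End TensorApplication.

(* Edges have [k.+1] vertices here: [k] is the paper's [k - 1]. *)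
Section PerronVector.
Variables (C : numClosedFieldType) (n k : nat) (E : {set {set 'I_n}}).
Variables (alpha rho xbar : C) (x : 'I_n -> C).
Hypotheses (k_gt0 : (0 < k)%N) (alpha_ge0 : 0 <= alpha) (alpha_lt1 : alpha < 1).
Hypotheses (unifE : uniform k.+1 E) (connE : connected E).
Hypotheses (x_gt0 : forall i, 0 < x i) (sum_xX : \sum_i x i ^+ k.+1 = 1).
Hypotheses (xbar_attained : exists i, x i = xbar) (le_xbar : forall i, x i <= xbar).

Let d i : C := (deg E i)%:R.
Let Delta : C := (max_deg E)%:R.
Let nbr i := \sum_(e in E | i \in e) \prod_(v in e :\ i) x v.
Let xprod (e : {set 'I_n}) := \prod_(v in e) x v.
Let edges_at i := [set e in E | i \in e].

Hypothesis eigen :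
  forall i, rho * x i ^+ k = alpha * d i * x i ^+ k + (1 - alpha) * nbr i.

Let b1 := alpha * Delta + (1 - alpha) * (k.+1 * #|E|)%:R * xbar ^+ k.+1.
Let deg_norm : C := (k.+1).-root ((\sum_i k.-root ((deg E i)%:R ^+ k.+1)) ^+ k).
Let b2 := alpha * Delta + (1 - alpha) * deg_norm * xbar ^+ k.

Lemma xbar_gt0 : 0 < xbar.
Proof. by case: xbar_attained => i <-. Qed.

Lemma one_sub_alpha_gt0 : 0 < 1 - alpha.
Proof. by rewrite subr_gt0. Qed.

Lemma card_edgeD1 e i : e \in E -> i \in e -> #|e :\ i| = k.
Proof. by move=> eE ie; exact: card_setD1_succ ie (unifE eE). Qed.

Lemma nbrE i : nbr i = \sum_(e in edges_at i) \prod_(v in e :\ i) x v.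
Proof. by apply: eq_bigl => e; rewrite inE. Qed.

Lemma prod_le_xbar (A : {set 'I_n}) : \prod_(v in A) x v <= xbar ^+ #|A|.
Proof. by rewrite -prodr_const; apply: ler_prod => v _; rewrite ltW ?le_xbar. Qed.

Lemma nbr_le i : nbr i <= d i * xbar ^+ k.
Proof.
rewrite nbrE /d mulr_natl -sumr_const; apply: ler_sum => e; rewrite inE => /andP[eE ie].
by rewrite -(card_edgeD1 eE ie) prod_le_xbar.
Qed.

Lemma rho_rayleigh :
  rho = alpha * \sum_i d i * x i ^+ k.+1 + (1 - alpha) * \sum_i x i * nbr i.
Proof.
rewrite -[LHS]mulr1 -{1}sum_xX !mulr_sumr -big_split; apply: eq_bigr => i _ /=.
by rewrite !exprS mulrCA eigen; ring.
Qed.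

Lemma sum_x_nbr : \sum_i x i * nbr i = k.+1%:R * \sum_(e in E) xprod e.
Proof.
transitivity (\sum_i \sum_(e in E) (if i \in e then xprod e else 0)).
  apply: eq_bigr => i _; rewrite /nbr mulr_sumr big_mkcondr /=.
  by apply: eq_bigr => e _; case ie: (i \in e); rewrite /xprod ?[RHS](big_setD1 i).
rewrite exchange_big mulr_sumr; apply: eq_bigr => e eE.
by rewrite -big_mkcond sumr_const -(unifE eE) mulr_natl.
Qed.

Lemma sum_deg_le : \sum_i d i * x i ^+ k.+1 <= Delta.
Proof.
rewrite -[leRHS]mulr1 -sum_xX mulr_sumr; apply: ler_sum => i _.
by rewrite ler_wpM2r ?exprn_ge0 ?(ltW (x_gt0 i)) // ler_nat (leq_bigmax i).
Qed.

Lemma rho_le_of_sum_x_nbr_le B :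
  \sum_i x i * nbr i <= B -> rho <= alpha * Delta + (1 - alpha) * B.
Proof.
move=> le_B; rewrite rho_rayleigh lerD ?ler_wpM2l ?sum_deg_le //.
exact: ltW one_sub_alpha_gt0.
Qed.

Lemma sum_x_nbr_eq_of_rho_eq B : \sum_i x i * nbr i <= B ->
  rho = alpha * Delta + (1 - alpha) * B -> \sum_i x i * nbr i = B.
Proof.
move=> le_B; rewrite rho_rayleigh => /lerD_eq eq_B.
apply: (mulfI (lt0r_neq0 one_sub_alpha_gt0)); apply: eq_B; rewrite ler_wpM2l ?sum_deg_le //.
exact: ltW one_sub_alpha_gt0.
Qed.

Lemma sum_x_nbr_le_card : \sum_i x i * nbr i <= (k.+1 * #|E|)%:R * xbar ^+ k.+1.
Proof.
rewrite sum_x_nbr natrM -mulrA ler_wpM2l // mulr_natl -sumr_const.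
by apply: ler_sum => e eE; rewrite -(unifE eE) prod_le_xbar.
Qed.

Lemma sum_x_nbr_le_deg : \sum_i x i * nbr i <= \sum_i x i * (d i * xbar ^+ k).
Proof. by apply: ler_sum => i _; rewrite ler_wpM2l ?nbr_le ?ltW. Qed.

Lemma sum_x_deg_le : \sum_i x i * (d i * xbar ^+ k) <= deg_norm * xbar ^+ k.
Proof.
under eq_bigr do rewrite mulrA [x _ * _]mulrC.
rewrite -mulr_suml ler_wpM2r ?exprn_ge0 ?(ltW xbar_gt0) // /deg_norm.
pose a i := k.-root (d i).
have a_ge0 i : 0 <= a i by rewrite rootC_ge0 ?ler0n.
have aK i : a i ^+ k = d i by rewrite rootCK.
rewrite [X in _ <= _.-root (X ^+ _)](eq_bigr (fun i => a i ^+ k.+1)) => [|i _].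
  rewrite rootCX ?sumr_ge0 // => [|i _]; last by rewrite exprn_ge0.
  rewrite [X in X <= _](eq_bigr (fun i => a i ^+ k * x i)) => [|i _]; last by rewrite aK.
  by apply: holder_pow => // i; rewrite ltW.
by rewrite rootCX ?ler0n.
Qed.

Lemma sum_x_nbr_le : \sum_i x i * nbr i <= deg_norm * xbar ^+ k.
Proof. exact: le_trans sum_x_nbr_le_deg sum_x_deg_le. Qed.

Lemma rho_le_b1 : rho <= b1.
Proof. by rewrite /b1 -mulrA rho_le_of_sum_x_nbr_le ?sum_x_nbr_le_card. Qed.

Lemma rho_le_b2 : rho <= b2.
Proof. by rewrite /b2 -mulrA rho_le_of_sum_x_nbr_le ?sum_x_nbr_le. Qed.

Lemma prod_eq_xbar (A : {set 'I_n}) :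
  \prod_(v in A) x v = xbar ^+ #|A| -> forall v, v \in A -> x v = xbar.
Proof.
rewrite -prodr_const => eq_xbar; apply: ler_prod_eq => // [v _|].
  by rewrite ltW ?le_xbar.
by rewrite prodr_const expf_neq0 ?lt0r_neq0 ?xbar_gt0.
Qed.

Lemma nbr_eq_max i : nbr i = d i * xbar ^+ k ->
  forall e v, e \in E -> i \in e -> v \in e :\ i -> x v = xbar.
Proof.
move=> eq_nbr e v eE ie; apply: prod_eq_xbar; rewrite (card_edgeD1 eE ie).
have /ler_sum_eq : {in edges_at i, forall e, \prod_(v in e :\ i) x v <= xbar ^+ k}.
  by move=> f; rewrite inE => /andP[fE if_]; rewrite -(card_edgeD1 fE if_) prod_le_xbar.
apply; last by rewrite inE eE ie.
by rewrite sumr_const -mulr_natl -nbrE eq_nbr.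
Qed.

Lemma rho_eq_deg : (forall v, x v = xbar) -> forall i, rho = d i.
Proof.
move=> x_const i; apply: (mulIf (expf_neq0 k (lt0r_neq0 xbar_gt0))).
have nbr_xbar : nbr i = d i * xbar ^+ k.
  rewrite nbrE /d mulr_natl -sumr_const; apply: eq_bigr => e; rewrite inE => /andP[eE ie].
  by under eq_bigr do rewrite x_const; rewrite prodr_const card_edgeD1.
by move: (eigen i); rewrite x_const nbr_xbar => ->; ring.
Qed.

Lemma regular_of_max_on_edges :
  (forall e v, e \in E -> v \in e -> x v = xbar) -> regular E.
Proof.
move=> max_on_edges.
have x_const : forall v, x v = xbar.
  by apply: connected_closed connE xbar_attained _ => e u v eE _ ve _; exact: max_on_edges ve.
by move=> i j; apply/eqP; rewrite -(eqr_nat C) -/(d i) -/(d j) -!rho_eq_deg.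
Qed.

Lemma regular_of_rho_eq_b1 : rho = b1 -> regular E.
Proof.
have Sk_neq0 : k.+1%:R != 0 :> C by rewrite pnatr_eq0.
rewrite /b1 -mulrA => /(sum_x_nbr_eq_of_rho_eq sum_x_nbr_le_card).
rewrite sum_x_nbr natrM -mulrA => /(mulfI Sk_neq0).
rewrite mulr_natl -sumr_const => /ler_sum_eq xprod_eq.
apply: regular_of_max_on_edges => e v eE; apply: prod_eq_xbar.
by rewrite (unifE eE); apply: xprod_eq => // f fE; rewrite -(unifE fE) prod_le_xbar.
Qed.

Lemma regular_of_rho_eq_b2 : rho = b2 -> regular E.
Proof.
rewrite /b2 -mulrA => /(sum_x_nbr_eq_of_rho_eq sum_x_nbr_le) eq_norm.
have /ler_sum_eq x_nbr_eq : forall i, true -> x i * nbr i <= x i * (d i * xbar ^+ k).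
  by move=> i _; rewrite ler_wpM2l ?nbr_le ?ltW.
have nbr_eq i : nbr i = d i * xbar ^+ k.
  apply: (mulfI (lt0r_neq0 (x_gt0 i))); apply: x_nbr_eq => //; apply/eqP.
  by rewrite eq_le sum_x_nbr_le_deg eq_norm sum_x_deg_le.
apply: regular_of_max_on_edges => e v eE ve.
have /card_gt0P [i] : (0 < #|e :\ v|)%N by rewrite (card_edgeD1 eE ve).
rewrite !inE => /andP[i_neq_v ie].
by apply: (nbr_eq_max (nbr_eq i) eE ie); rewrite !inE eq_sym i_neq_v.
Qed.

Hypothesis rho_max :
  forall lam, is_eigenvalue (@A_alpha C n k.+1 E alpha) lam -> `|lam| <= rho.

Lemma deg_le_rho i : regular E -> d i <= rho.
Proof.
move=> regE; suff /rho_max : is_eigenvalue (@A_alpha C n k.+1 E alpha) (d i).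
  by rewrite ger0_norm ?ler0n.
exists (fun=> 1); split => [|j]; first by exists i; exact: oner_neq0.
rewrite tapply_A_alpha // expr1n !mulr1.
under eq_bigr do rewrite prodr_const expr1n.
rewrite (eq_bigl (fun e => e \in [set e in E | j \in e])) => [|e]; last by rewrite inE.
by rewrite sumr_const -/(deg E j) /d (regE i j); ring.
Qed.

Lemma x_const_of_regular : regular E -> forall v, x v = xbar.
Proof.
move=> regE; apply: connected_closed connE xbar_attained _ => e u v eE ue ve xu.
have [-> // | v_neq_u] := eqVneq v u.
apply: (nbr_eq_max _ eE ue); last by rewrite !inE v_neq_u.
apply/eqP; rewrite eq_le nbr_le -(ler_pM2l one_sub_alpha_gt0) /=.
have -> : (1 - alpha) * nbr u = rho * xbar ^+ k - alpha * d u * xbar ^+ k.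
  by rewrite -xu eigen; ring.
have -> : (1 - alpha) * (d u * xbar ^+ k) = d u * xbar ^+ k - alpha * d u * xbar ^+ k.
  by ring.
by rewrite lerD2r ler_wpM2r ?exprn_ge0 ?(ltW xbar_gt0) ?deg_le_rho.
Qed.

Lemma deg_norm_xbar_of_const i0 : (forall i, x i = xbar) -> (forall i, d i = d i0) ->
  deg_norm * xbar ^+ k = d i0.
Proof.
move=> x_const d_const; pose u := k.-root (d i0).
have u_ge0 : 0 <= u by rewrite rootC_ge0 ?ler0n.
have xbarX_neq0 m : xbar ^+ m != 0 by rewrite expf_neq0 ?lt0r_neq0 ?xbar_gt0.
have n_eq : n%:R = (xbar ^+ k.+1)^-1.
  apply: (mulIf (xbarX_neq0 k.+1)); rewrite mulVf // -[RHS]sum_xX.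
  by under [RHS]eq_bigr do rewrite x_const; rewrite sumr_const card_ord mulr_natl.
rewrite /deg_norm; have -> : \sum_i k.-root ((deg E i)%:R ^+ k.+1) = (u / xbar) ^+ k.+1.
  under eq_bigr => i _ do rewrite -/(d i) d_const rootCX ?ler0n //.
  by rewrite sumr_const card_ord -mulr_natl n_eq expr_div_n mulrC.
rewrite -exprM mulnC exprM exprCK ?exprn_ge0 ?divr_ge0 ?(ltW xbar_gt0) //.
by rewrite expr_div_n divfK // rootCK.
Qed.

Lemma rho_eq_b1_b2_of_regular : regular E -> rho = b1 /\ rho = b2.
Proof.
move=> regE; have x_const := x_const_of_regular regE.
have [i0 _] := xbar_attained.
have d_const i : d i = d i0 by rewrite /d (regE i i0).
have rho_d : rho = d i0 := rho_eq_deg x_const i0.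
have Delta_d : Delta = d i0.
  congr (_%:R); apply/eqP; rewrite eqn_leq leq_bigmax andbT.
  by apply/bigmax_leqP => i _; rewrite (regE i i0).
have sum_x_nbr_d : \sum_i x i * nbr i = d i0.
  have sum_deg : \sum_i d i * x i ^+ k.+1 = d i0.
    by under eq_bigr do rewrite d_const; rewrite -mulr_sumr sum_xX mulr1.
  apply: (mulfI (lt0r_neq0 one_sub_alpha_gt0)); apply: (addrI (alpha * d i0)).
  by rewrite -[in LHS]sum_deg -rho_rayleigh rho_d; ring.
rewrite /b1 /b2 Delta_d -!mulrA (deg_norm_xbar_of_const x_const d_const); split; last first.
  by rewrite rho_d; ring.
suff -> : (k.+1 * #|E|)%:R * xbar ^+ k.+1 = d i0 by rewrite rho_d; ring.
rewrite -sum_x_nbr_d sum_x_nbr natrM -mulrA; congr (_ * _).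
rewrite mulr_natl -sumr_const; apply: eq_bigr => e eE.
by rewrite /xprod; under eq_bigr do rewrite x_const; rewrite prodr_const (unifE eE).
Qed.

Lemma perron_bounds :
  [/\ rho <= b1, rho <= b2, rho = b1 <-> regular E & rho = b2 <-> regular E].
Proof.
split; [exact: rho_le_b1 | exact: rho_le_b2 | split | split].
- exact: regular_of_rho_eq_b1.
- by case/rho_eq_b1_b2_of_regular.
- exact: regular_of_rho_eq_b2.
- by case/rho_eq_b1_b2_of_regular.
Qed.

End PerronVector.

Theorem theorem3p2 (C : numClosedFieldType) (n k : nat) (E : {set {set 'I_n}})
  (alpha rho xbar : C) (x : 'I_n -> C) :
  (2 <= k)%N -> 0 <= alpha -> alpha < 1 ->
  uniform k E -> connected E ->
  is_spectral_radius (@A_alpha C n k E alpha) rho ->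
  is_alpha_perron_vector k E alpha rho x ->
  (exists i, x i = xbar) -> (forall i, x i <= xbar) ->
  let Delta := (max_deg E)%:R in
  let b1 := alpha * Delta + (1 - alpha) * (k * #|E|)%:R * xbar ^+ k in
  let b2 := alpha * Delta + (1 - alpha) *
      k.-root ((\sum_i (k.-1).-root ((deg E i)%:R ^+ k)) ^+ k.-1)
      * xbar ^+ k.-1 in
  [/\ rho <= b1, rho <= b2, rho = b1 <-> regular E & rho = b2 <-> regular E].
Proof.
case: k => [|k] // k_ge2 alpha_ge0 alpha_lt1 unifE connE [_ rho_max] [x_gt0 sum_xX eig].
move=> xbar_attained le_xbar Delta b1 b2.
apply: perron_bounds => // i; rewrite -tapply_A_alpha //; exact/esym/eig.
Qed.
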